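(* Fix integers $m>1$ and $K>\lfloor m/2\rfloor$. Let $\{z_n\}$ be generated by $\mathcal{S}(\kappa,\Phi)$ with $\kappa$ satisfying $\sum_n\rho^{\kappa(n)}=\infty$ for all $0<\rho\le1$ and $\Phi(x,S)=|V_S(x)|-\operatorname{modefreq}_f(V_S(x))$ with $V_S(x)$ the $K$-nearest neighbors of $x$ with respect to $S$, and let $\zeta_n(x)=\operatorname{mode}_f(U_{Z_n}(x))$ be the $m$ nearest neighbors prediction. If $x\in X$ is contained in an $f$-contiguous component of positive $\mu$-measure, then $\zeta_n(x)\to f(x)$ with probability one.
   Context: $(X,d)$ metric space with probability measure $\mu$; $Y$ countable; $f:X\to Y$; $X_y=f^{-1}(y)$; $\operatorname{supp}(\mu)=\{x:\mu(B_\epsilon(x))>0\ \forall\epsilon>0\}$. $b$ is an $f$-boundary point iff $\mu(B_\epsilon(b)\setminus X_{f(b)})>0$ for all $\epsilon>0$. $R$ is $f$-connected iff connected and contained in some $X_y$; $f$-contiguous iff $f$-connected, contained in $\operatorname{supp}(\mu)$, and with no $f$-boundary points; an $f$-contiguous component is a maximal $f$-contiguous set. $\operatorname{modefreq}_f(A)=\max_y|A\cap X_y|$ ($0$ for empty $A$); $\operatorname{mode}_f(A)$ is a $y$ attaining it (ties uniformly at random). $K$-nearest neighbors: $V_S(x)=\emptyset$ if $x\in S$, otherwise a $K$-element subset of $S$ minimizing distance to $x$, chosen among such to minimize $\operatorname{modefreq}_f$. $m$ nearest neighbors: $U_S(x)=\{x\}$ if $x\in S$, otherwise an $m$-element subset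 of $S$ minimizing distance to $x$, chosen among such to minimize $\operatorname{modefreq}_f$. Process $\mathcal{S}(\kappa,\Phi)$: $Z_0=\emptyset$; at step $n$ draw $\kappa(n)$ candidates i.i.d. from $\mu$, independent of the past; $z_n$ maximizes $\Phi(\cdot,Z_{n-1})$ over candidates (ties uniformly at random); $Z_n=\{z_1,\dots,z_n\}$. *)

From HB Require Import structures.
From mathcomp Require Import all_boot all_order all_algebra.
From mathcomp Require Import finmap.
From mathcomp Require Import all_classical all_reals all_analysis.
Set Implicit Arguments. Unset Strict Implicit. Unset Printing Implicit Defensive.
Import Order.TTheory GRing.Theory Num.Theory.
Local Open Scope classical_set_scope.
Local Open Scope ring_scope.

Section MetricDefs.
Variables (R : realType) (dX : measure_display) (X : measurableType dX).
Variable (dist : X -> X -> R).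

Definition is_metric :=
  [/\ forall x y, 0 <= dist x y,
      forall x y, dist x y = 0 <-> x = y,
      forall x y, dist x y = dist y x &
      forall x y z, dist x z <= dist x y + dist y z].

Definition mball (x : X) (e : R) : set X := [set y | dist x y < e].

Definition mopen (A : set X) : Prop :=
  forall x, A x -> exists2 e : R, 0 < e & mball x e `<=` A.

Definition mconnected (C : set X) : Prop :=
  ~ exists U V : set X,
      [/\ mopen U /\ mopen V, C `<=` U `|` V,
          C `&` U !=set0, C `&` V !=set0 & C `&` U `&` V = set0].

Definition borel_of_metric : Prop :=
  forall A : set X, measurable A <-> <<s mopen >> A.

Variable (mu : probability X R).
Variables (Y : countType) (f : X -> Y).

Definition fiber (y : Y) : set X := f @^-1` [set y].

Definition supp : set X :=
  [set x | forall e : R, 0 < e -> (0 < mu (mball x e))%E].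

Definition f_boundary_point (b : X) : Prop :=
  forall e : R, 0 < e -> (0 < mu (mball b e `\` fiber (f b)))%E.

Definition f_connected (C : set X) : Prop :=
  mconnected C /\ exists y, C `<=` fiber y.

Definition f_contiguous (C : set X) : Prop :=
  [/\ f_connected C, C `<=` supp & ~ exists2 b, C b & f_boundary_point b].

Definition f_contiguous_component (C : set X) : Prop :=
  f_contiguous C /\ forall D, f_contiguous D -> C `<=` D -> D = C.

(** modefreq_f(A) = max_y |A cap X_y|  (the max is attained at a label of an
    element of A; it is 0 for empty A) *)
Definition modefreq (A : {fset X}) : nat :=
  \max_(a <- A) #|` [fset b in A | f b == f a]%fset|.

Definition nearest_sets (k : nat) (S : {fset X}) (x : X) (V : {fset X}) : Prop :=
  [/\ (V `<=` S)%fset, #|` V| = minn k #|` S| &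
      forall v s, v \in V -> s \in S -> s \notin V -> dist x v <= dist x s].

Definition is_knn_V (k : nat) (S : {fset X}) (x : X) (V : {fset X}) : Prop :=
  if x \in S then V = fset0 else
  nearest_sets k S x V /\
  forall V', nearest_sets k S x V' -> (modefreq V <= modefreq V')%N.

Definition is_knn_U (k : nat) (S : {fset X}) (x : X) (U : {fset X}) : Prop :=
  if x \in S then U = [fset x]%fset else
  nearest_sets k S x U /\
  forall U', nearest_sets k S x U' -> (modefreq U <= modefreq U')%N.

Definition mode_ties (A : {fset X}) : seq Y :=
  path.sort (fun a b : Y => (choice.pickle a <= choice.pickle b)%N)
    (undup [seq f a | a <- A & #|` [fset b in A | f b == f a]%fset| == modefreq A]).

(** mode_f(A), ties broken by the uniform [0,1) variable w:
    the floor(w * #ties)-th tied label (default y0 if A is empty) *)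
Definition mode_with (y0 : Y) (w : R) (A : {fset X}) : Y :=
  let T := mode_ties A in nth y0 T (Num.truncn (w * (size T)%:R)).

End MetricDefs.

Section Process.
Variables (R : realType) (dX : measure_display) (X : measurableType dX).
Variables (Y : countType) (f : X -> Y).
Variables (dO : measure_display) (Omega : measurableType dO).
Variable (kappa : nat -> nat).
Variable (Phi : X -> {fset X} -> nat).
(** c n j = j-th candidate (j < kappa n) of step n;
    u n = uniform [0,1) variable for tie breaking at step n *)
Variables (c : nat -> nat -> Omega -> X) (u : nat -> Omega -> R).

Definition select (n : nat) (S : {fset X}) (om : Omega) : X :=
  let js := iota 0 (kappa n) in
  let mx := \max_(j <- js) Phi (c n j om) S in
  let M := [seq j <- js | Phi (c n j om) S == mx] in
  c n (nth 0%N M (Num.truncn (u n om * (size M)%:R))) om.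

Fixpoint Zset (n : nat) (om : Omega) : {fset X} :=
  match n with
  | 0 => fset0%fset
  | n'.+1 => (select n'.+1 (Zset n' om) om |` Zset n' om)%fset
  end.
End Process.

Section Indep.
Variables (R : realType) (dO : measure_display) (Omega : measurableType dO).
Variable (P : probability Omega R).

Definition mutually_independent (I : eqType) (E : I -> set (set Omega)) : Prop :=
  forall (J : seq I) (A : I -> set Omega), uniq J ->
    (forall i, i \in J -> E i (A i)) ->
    P [set om | forall i, i \in J -> A i om] = (\prod_(i <- J) P (A i))%E.

Definition rv_events (dT : measure_display) (T : measurableType dT)
  (Z : Omega -> T) : set (set Omega) :=
  [set A | exists2 B, measurable B & A = Z @^-1` B].
End Indep.

From HB Require Import structures.
From mathcomp Require Import all_boot all_order all_algebra.
From mathcomp Require Import finmap.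
From mathcomp Require Import all_classical all_reals all_analysis.
From mathcomp Require Import ring lra.
Import Order.TTheory GRing.Theory Num.Theory.
Local Open Scope classical_set_scope.
Local Open Scope ring_scope.

Set Implicit Arguments. Unset Strict Implicit. Unset Printing Implicit Defensive.

(** Since [x] lies in an f-contiguous component, [x] is in the
    support of [mu] and is not an f-boundary point: some ball [B_e(x)] meets
    the other fibres only in a [mu]-null set, so almost surely every candidate
    ever drawn within distance [e] of [x] has label [f x].  For every [r > 0]
    the events "all [kappa n] candidates of step [n] lie in [B_r(x)]" are
    independent with probabilities [mu(B_r(x)) ^ kappa n], whose sum diverges;
    by the second Borel-Cantelli lemma they occur infinitely often.  Whatever
    candidate the selection rule then picks, it is closer to [x] than every
    point already chosen, so [Z_n] eventually contains [x] or [m] points of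
    [B_e(x)]; from then on the [m] nearest neighbours of [x] all carry the
    label [f x], whatever [Phi] is. *)

Section Mode.
Variables (R : realType) (dX : measure_display) (X : measurableType dX).
Variables (Y : countType) (f : X -> Y).

Lemma mode_with_const y (w : R) (A : {fset X}) :
  (forall a, a \in A -> f a = y) -> mode_with f y w A = y.
Proof.
move=> fA; rewrite /mode_with; set T := mode_ties _ _; set k := Num.truncn _.
have [kT|Tk] := ltnP k (size T); last by rewrite nth_default.
move: (mem_nth y kT); rewrite /T /mode_ties mem_sort mem_undup.
by case/mapP => a; rewrite mem_filter => /andP[_ /fA <-] ->.
Qed.

End Mode.

Section Metric.
Variables (R : realType) (dX : measure_display) (X : measurableType dX).
Variable (dist : X -> X -> R).
Variables (Y : countType) (f : X -> Y).

Definition fset_ball (S : {fset X}) (x : X) (e : R) : {fset X} :=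
  [fset z in S | dist x z < e]%fset.

Lemma in_fset_ball S x e z : (z \in fset_ball S x e) = (z \in S) && (dist x z < e).
Proof. by rewrite inE. Qed.

Lemma fset_ballS S S' x e :
  (S `<=` S')%fset -> (fset_ball S x e `<=` fset_ball S' x e)%fset.
Proof.
move=> SS'; apply/fsubsetP => z; rewrite !in_fset_ball => /andP[zS ->].
by rewrite (fsubsetP SS').
Qed.

Lemma nearest_sets_in_ball k S x V e : nearest_sets dist k S x V ->
  (k <= #|` fset_ball S x e|)%N -> forall v, v \in V -> dist x v < e.
Proof.
case=> _ cardV near kG v vV; rewrite ltNge; apply/negP => ev.
have ballV : (v |` fset_ball S x e `<=` V)%fset.
  apply/fsubsetP => s /fset1UP[-> //|].
  rewrite in_fset_ball => /andP[sS ds]; apply/negPn/negP => sV.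
  by have := near v s vV sS sV; rewrite leNgt (lt_le_trans ds ev).
have vG : v \notin fset_ball S x e by rewrite in_fset_ball ltNge ev andbF.
have := fsubset_leq_card ballV; rewrite cardfsU1 vG cardV add1n.
by move=> /leq_trans/(_ (geq_minl _ _)); rewrite ltnNge kG.
Qed.

Lemma knn_U_in_ball m S x U e : is_knn_U dist f m S x U ->
  x \in S \/ (m <= #|` fset_ball S x e|)%N ->
  forall a, a \in U -> a = x \/ a \in S /\ dist x a < e.
Proof.
rewrite /is_knn_U; case: ifP => [_ -> _ a|xS [NS _] [//|mG] a aU].
  by rewrite inE => /eqP; left.
case: (NS) => US _ _; right; split; first exact: (fsubsetP US).
exact: nearest_sets_in_ball NS mG a aU.
Qed.

Hypothesis dist_metric : is_metric dist.

Lemma exists_radius_below (x : X) (e : R) (s : seq X) : 0 < e -> x \notin s ->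
  exists2 r, 0 < r & r <= e /\ forall z, z \in s -> r <= dist x z.
Proof.
case: dist_metric => dist_ge0 dist_eq0 _ _ e0.
elim: s => [|a s IH]; first by exists e.
rewrite in_cons negb_or => /andP[xa /IH[r r0 [re rs]]].
have dxa : 0 < dist x a.
  rewrite lt_neqAle dist_ge0 andbT eq_sym; apply/eqP => /dist_eq0 xa'.
  by rewrite xa' eqxx in xa.
exists (Num.min r (dist x a)); first by rewrite lt_min r0 dxa.
split=> [|z]; first by rewrite ge_min re.
by rewrite in_cons ge_min => /predU1P[->|/rs ->]; rewrite ?lexx ?orbT.
Qed.

Hypothesis borel : borel_of_metric dist.

Lemma mball_mopen x r : mopen dist (mball dist x r).
Proof.
case: dist_metric => _ _ _ tri y dy; exists (r - dist x y); first by rewrite subr_gt0.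
by move=> z dz; apply: le_lt_trans (tri x y z) _; rewrite -ltrBrDl.
Qed.

Lemma mball_measurable x r : measurable (mball dist x r).
Proof. by apply/borel; apply: sub_sigma_algebra; exact: mball_mopen. Qed.

Variable mu : probability X R.

Lemma not_boundary_null_ball b : ~ f_boundary_point dist mu f b ->
  exists2 e, 0 < e & mu (mball dist b e `\` fiber f (f b)) = 0%E.
Proof.
move=> nb; apply: contrapT => nnull; apply: nb => e e0.
rewrite lt0e measure_ge0 andbT; apply/eqP => null; apply: nnull; by exists e.
Qed.

End Metric.

Section Selection.
Variables (R : realType) (dX : measure_display) (X : measurableType dX).
Variable (dist : X -> X -> R).
Variables (Y : countType) (f : X -> Y).
Variables (dO : measure_display) (Omega : measurableType dO).
Variables (kappa : nat -> nat) (Phi : X -> {fset X} -> nat).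
Variables (c : nat -> nat -> Omega -> X) (u : nat -> Omega -> R) (om : Omega).
Hypothesis kappa_gt0 : forall n, (0 < kappa n)%N.

Local Notation Z n := (Zset kappa Phi c u n om).

Lemma select_candidate n S :
  exists2 j, (j < kappa n)%N & select kappa Phi c u n S om = c n j om.
Proof.
rewrite /select; set M := [seq j <- _ | _]; set k := Num.truncn _.
have [kM|Mk] := ltnP k (size M); last first.
  by exists 0%N; [exact: kappa_gt0 | rewrite nth_default].
exists (nth 0%N M k) => //.
by move: (mem_nth 0%N kM); rewrite mem_filter mem_iota add0n => /and3P[].
Qed.

Lemma Zset_monotone n n' : (n <= n')%N -> (Z n `<=` Z n')%fset.
Proof.
elim: n' => [|n' IH]; first by rewrite leqn0 => /eqP ->.
rewrite leq_eqVlt ltnS => /predU1P[-> //|/IH].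
by move/fsubset_trans; apply; exact: fsubsetU1.
Qed.

Lemma Zset_candidate n z : z \in Z n -> exists i j, z = c i j om.
Proof.
elim: n => [|n IH] //= /fset1UP[->|/IH //].
have [j _ ->] := select_candidate n.+1 (Z n).
by exists n.+1, j.
Qed.

Definition blocks_cluster_at (x : X) : Prop :=
  forall r, 0 < r -> forall N, exists2 n, (N <= n)%N &
    forall j, (j < kappa n)%N -> dist x (c n j om) < r.

Hypothesis dist_metric : is_metric dist.
Variables (x : X) (e : R).
Hypothesis e_gt0 : 0 < e.

(* A block inside a ball of radius [<= e] that misses [Z N] adds, whatever
   candidate is selected, a point of [B_e(x)] not yet in [Z N]. *)
Lemma Zset_ball_unbounded i : blocks_cluster_at x ->
  exists N, x \in Z N \/ (i <= #|` fset_ball dist (Z N) x e|)%N.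
Proof.
move=> acc; elim: i => [|i [N HN]]; first by exists 0%N; right.
have [xZ|xZ] := boolP (x \in Z N); first by exists N; left.
case: HN => [xZ'|iN]; first by rewrite xZ' in xZ.
have [r r0 [re rZ]] := exists_radius_below dist_metric e_gt0 xZ.
have [[|n] Nn near] := acc r r0 N.+1; first by [].
have [j jk sel] := select_candidate n.+1 (Z n).
exists n.+1; right.
have zZ : c n.+1 j om \in Z n.+1 by rewrite /= -sel fset1U1.
have dz : dist x (c n.+1 j om) < r := near j jk.
have zN : c n.+1 j om \notin fset_ball dist (Z N) x e.
  by rewrite in_fset_ball; apply/negP => /andP[/rZ]; rewrite leNgt dz.
have sub : (c n.+1 j om |` fset_ball dist (Z N) x e
            `<=` fset_ball dist (Z n.+1) x e)%fset.
  apply/fsubsetP => z /fset1UP[->|].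
    by rewrite in_fset_ball zZ (lt_le_trans dz re).
  by apply/fsubsetP/fset_ballS/Zset_monotone/ltnW.
by apply: leq_trans (fsubset_leq_card sub); rewrite cardfsU1 zN.
Qed.

Lemma mode_knn_eventually m (Usel : {fset X} -> {fset X}) :
  (forall S, is_knn_U dist f m S x (Usel S)) ->
  (forall i j, dist x (c i j om) < e -> f (c i j om) = f x) ->
  blocks_cluster_at x ->
  exists N, forall n, (N <= n)%N -> forall w0 : R,
    mode_with f (f x) w0 (Usel (Z n)) = f x.
Proof.
move=> knn label acc; have [N HN] := Zset_ball_unbounded m acc.
exists N => n Nn w0; apply: mode_with_const => a aU.
have close : x \in Z n \/ (m <= #|` fset_ball dist (Z n) x e|)%N.
  case: HN => [xZ|mN]; first by left; exact: (fsubsetP (Zset_monotone Nn)).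
  by right; apply: leq_trans mN (fsubset_leq_card (fset_ballS dist x e (Zset_monotone Nn))).
have [-> //|[aZ da]] := knn_U_in_ball (knn (Z n)) close aU.
have [i [j aij]] := Zset_candidate aZ.
by rewrite aij label -?aij.
Qed.

End Selection.

Section CapSeq.
Variables (I : eqType) (T : Type).

Definition cap_seq (s : seq I) (F : I -> set T) : set T :=
  [set t | forall i, i \in s -> F i t].

Lemma cap_seq_nil F : cap_seq [::] F = setT.
Proof. by apply/seteqP; split=> t. Qed.

Lemma cap_seq_cons a s F : cap_seq (a :: s) F = F a `&` cap_seq s F.
Proof.
apply/seteqP; split=> t /=.
  by move=> Ft; split=> [|i si]; apply: Ft; rewrite inE ?eqxx ?si ?orbT.
by move=> [Fa Fs] i; rewrite inE => /predU1P[->|/Fs].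
Qed.

End CapSeq.

Lemma cap_seq_measurable d (T : measurableType d) (I : eqType) (s : seq I)
    (F : I -> set T) :
  (forall i, measurable (F i)) -> measurable (cap_seq s F).
Proof.
move=> mF; elim: s => [|a s IH]; first by rewrite cap_seq_nil.
by rewrite cap_seq_cons; exact: measurableI.
Qed.

(* Stands in for [1 - g <= exp (- g)] in the second Borel-Cantelli lemma. *)
Lemma prod_1B_mul_1Dsum_le1 (R : realFieldType) (I : Type) (g : I -> R) (l : seq I) :
  (forall i, 0 <= g i <= 1) ->
  \prod_(i <- l) (1 - g i) * (1 + \sum_(i <- l) g i) <= 1.
Proof.
move=> g01; elim: l => [|a l IH]; first by rewrite !big_nil addr0 mulr1.
rewrite !big_cons; have /andP[ga0 ga1] := g01 a.
set p := \prod_(i <- l) _ in IH *; set t := \sum_(i <- l) _ in IH *.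
have p0 : 0 <= p.
  by apply: prodr_ge0 => i _; have /andP[_ ?] := g01 i; rewrite subr_ge0.
have t0 : 0 <= t by apply: sumr_ge0 => i _; have /andP[] := g01 i.
have loss : 0 <= g a * (p * (g a + t)) by rewrite !mulr_ge0 // addr_ge0.
have -> : (1 - g a) * p * (1 + (g a + t)) = p * (1 + t) - g a * (p * (g a + t)).
  by ring.
lra.
Qed.

Lemma divergent_series_tail_unbounded (R : realType) (g : nat -> R) :
  (forall n, 0 <= g n) -> (\sum_(1 <= n <oo) (g n)%:E)%E = +oo%E ->
  forall N b, exists M, b <= \sum_(n <- iota N M) g n.
Proof.
move=> g0 div N b; apply: contrapT => /forallNP tail_lt.
suff : (\sum_(1 <= n <oo) (g n)%:E <= (\sum_(0 <= n < N) g n + b)%:E)%E.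
  by rewrite div leye_eq.
apply: lime_le; first by apply: is_cvg_nneseries => n _ _; rewrite lee_fin.
apply: nearW => M; rewrite sumEFin lee_fin.
have drop0 k : \sum_(1 <= i < k) g i <= \sum_(0 <= i < k) g i.
  case: k => [|k]; first by rewrite !big_geq.
  by rewrite [leRHS]big_ltn // lerDr.
apply: le_trans (nondecreasing_series (fun n _ _ => g0 n) (leq_addl N M)) _.
apply: le_trans (drop0 _) _.
rewrite (@big_cat_nat _ _ _ N 0 (N + M)) ?leq_addr // lerD2l.
by rewrite /index_iota addKn leNgt; apply/negP => /ltW /tail_lt.
Qed.

Section SecondBorelCantelli.
Variables (R : realType) (d : measure_display) (T : measurableType d).
Variable (P : probability T R).
Variable (F : nat -> set T).
Hypothesis F_measurable : forall n, measurable (F n).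
Hypothesis F_indep :
  forall s, uniq s -> P (cap_seq s F) = (\prod_(i <- s) P (F i))%E.

Let pr (A : set T) : R := fine (P A).

Let prE A : measurable A -> P A = (pr A)%:E.
Proof. by move=> mA; rewrite /pr fineK // fin_num_measure. Qed.

Let pr_indep s : uniq s -> pr (cap_seq s F) = \prod_(i <- s) pr (F i).
Proof.
move=> us; rewrite /pr F_indep // (eq_bigr (fun i => (pr (F i))%:E)).
  by rewrite prodEFin.
by move=> i _; rewrite prE.
Qed.

Lemma pr_cap_seq_compl L J : uniq (L ++ J) ->
  pr (cap_seq J F `&` cap_seq L (fun i => ~` F i)) =
    \prod_(i <- J) pr (F i) * \prod_(i <- L) (1 - pr (F i)).
Proof.
elim: L J => [|a L IH] J.
  by move=> uJ; rewrite cap_seq_nil setIT big_nil mulr1 pr_indep.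
move=> uaLJ; have uLJ : uniq (L ++ J) by case/andP: uaLJ.
have uLaJ : uniq (L ++ a :: J) by rewrite -cat1s uniq_catCA.
set A := cap_seq J F `&` cap_seq L (fun i => ~` F i).
have mA : measurable A.
  by apply: measurableI; apply: cap_seq_measurable => // i; exact: measurableC.
have -> : cap_seq J F `&` cap_seq (a :: L) (fun i => ~` F i) = A `\` F a.
  by rewrite cap_seq_cons /A setDE setIAC setIA.
have AF : A `&` F a = cap_seq (a :: J) F `&` cap_seq L (fun i => ~` F i).
  by rewrite cap_seq_cons /A setIAC [F a `&` _]setIC.
rewrite /pr measureD // ?ltey_eq ?fin_num_measure // fineB ?fin_num_measure //;
  last exact: measurableI.
rewrite -!/(pr _) AF (IH J uLJ) (IH (a :: J) uLaJ) !big_cons /pr; ring.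
Qed.

Lemma borel_cantelli_tail_negligible N :
  (\sum_(1 <= n <oo) P (F n))%E = +oo%E ->
  P.-negligible (\bigcap_(n in [set n | (N <= n)%N]) ~` F n).
Proof.
move=> div; set E := \bigcap_(n in _) _.
have mE : measurable E.
  by apply: bigcap_measurable => [|n _]; [exists N => /= | exact: measurableC].
exists E; split => //; rewrite prE //; congr (_%:E).
have prE0 : 0 <= pr E by exact/fine_ge0/measure_ge0.
apply/eqP; rewrite eq_le prE0 andbT leNgt; apply/negP => prE_gt0.
have pr01 n : 0 <= pr (F n) <= 1.
  by rewrite fine_ge0 ?measure_ge0 // -lee_fin -prE ?probability_le1.
have pr0 n : 0 <= pr (F n) by have /andP[] := pr01 n.
have div' : (\sum_(1 <= n <oo) (pr (F n))%:E)%E = +oo%E.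
  by rewrite -div; apply: eq_eseriesr => n _; rewrite -prE.
(* [pr E <= prod (1 - pr F) <= 1 / (1 + S)], while [S] can be made [>= 1 / pr E]. *)
have [M sumM] := divergent_series_tail_unbounded pr0 div' N (pr E)^-1.
have prE_le : pr E <= \prod_(n <- iota N M) (1 - pr (F n)).
  have := @pr_cap_seq_compl (iota N M) [::].
  rewrite cats0 iota_uniq cap_seq_nil setTI big_nil mul1r => <- //.
  have mC : measurable (cap_seq (iota N M) (fun i => ~` F i)).
    by apply: cap_seq_measurable => i; exact: measurableC.
  apply: fine_le; rewrite ?fin_num_measure //; apply: le_measure; rewrite ?inE //.
  by move=> t Et i; rewrite mem_iota => /andP[Ni _]; exact: Et.
have := prod_1B_mul_1Dsum_le1 (iota N M) pr01.
set p := \prod_(_ <- _) _ in prE_le *; set S := \sum_(_ <- _) _ in sumM *.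
have S0 : 0 <= S by apply: sumr_ge0.
have : 1 <= pr E * S by rewrite -(mulfV (lt0r_neq0 prE_gt0)) ler_wpM2l // ltW.
nra.
Qed.

End SecondBorelCantelli.

Section CandidateBlocks.
Variables (R : realType) (dX : measure_display) (X : measurableType dX).
Variable (mu : probability X R).
Variables (dO : measure_display) (Omega : measurableType dO).
Variable (P : probability Omega R).
Variables (kappa : nat -> nat) (c : nat -> nat -> Omega -> X).
Variables (u w : nat -> Omega -> R).
Hypothesis c_measurable : forall n j, measurable_fun setT (c n j).
Hypothesis c_law : forall n j B, measurable B -> P (c n j @^-1` B) = mu B.
Hypothesis indep : mutually_independent P
    (fun i : ((nat * nat) + nat) + nat => match i with
     | inl (inl nj) => rv_events (c nj.1 nj.2)
     | inl (inr n) => rv_events (u n)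
     | inr n => rv_events (w n)
     end).

Lemma candidate_preimage_measurable n j B :
  measurable B -> measurable (c n j @^-1` B).
Proof. by move=> mB; rewrite -[_ @^-1` _]setTI; exact: c_measurable. Qed.

Section Block.
Variable B : set X.
Hypothesis B_measurable : measurable B.

Definition block_in n : set Omega :=
  cap_seq (iota 0 (kappa n)) (fun j => c n j @^-1` B).

Lemma block_in_measurable n : measurable (block_in n).
Proof. by apply: cap_seq_measurable => j; exact: candidate_preimage_measurable. Qed.

Lemma block_in_cap_seq s : uniq s ->
  P (cap_seq s block_in) = (\prod_(n <- s) \prod_(j <- iota 0 (kappa n)) mu B)%E.
Proof.
move=> us.
pose J := [seq (inl (inl (n, j)) : ((nat * nat) + nat) + nat)
          | n <- s, j <- iota 0 (kappa n)].
pose A (i : ((nat * nat) + nat) + nat) : set Omega :=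
  if i is inl (inl (n, j)) then c n j @^-1` B else setT.
have uJ : uniq J.
  apply: allpairs_uniq_dep => // [n _|]; first exact: iota_uniq.
  by move=> [n j] [n' j'] _ _ /= [-> ->].
have -> : cap_seq s block_in = cap_seq J A.
  apply/seteqP; split => om /=.
    by move=> blk i /allpairsPdep[n [j [ns jk ->]]]; exact: blk.
  move=> HJ n ns j jk; apply: (HJ (inl (inl (n, j)))).
  exact: (allpairs_f_dep (fun n j => (inl (inl (n, j)) : ((nat * nat) + nat) + nat))).
rewrite (indep (A := A) uJ) ?big_allpairs_dep; last first.
  by move=> i /allpairsPdep[n [j [_ _ ->]]]; exists B.
by apply: eq_bigr => n _; apply: eq_bigr => j _; exact: c_law.
Qed.

Lemma block_in_prob n : P (block_in n) = (\prod_(j <- iota 0 (kappa n)) mu B)%E.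
Proof.
have := @block_in_cap_seq [:: n] isT.
by rewrite cap_seq_cons cap_seq_nil setIT big_seq1.
Qed.

Lemma block_in_indep s : uniq s ->
  P (cap_seq s block_in) = (\prod_(n <- s) P (block_in n))%E.
Proof.
move=> us; rewrite block_in_cap_seq //.
by apply: eq_bigr => n _; rewrite block_in_prob.
Qed.

Lemma block_in_infinitely_often :
  (forall rho : R, 0 < rho <= 1 ->
     (\sum_(1 <= n <oo) (rho ^+ kappa n)%:E)%E = +oo%E) ->
  (0 < mu B)%E ->
  P.-negligible (\bigcup_N \bigcap_(n in [set n | (N <= n)%N]) ~` block_in n).
Proof.
move=> div muB_gt0; apply: negligible_bigcup => N.
apply: (borel_cantelli_tail_negligible block_in_measurable block_in_indep).
set rho := fine (mu B).
have muBE : mu B = rho%:E by rewrite fineK // fin_num_measure.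
rewrite -(div rho); last first.
  by apply/andP; split; [rewrite -lte_fin -muBE | rewrite -lee_fin -muBE probability_le1].
apply: eq_eseriesr => n _.
have := prodr_const_nat 0 (kappa n) rho; rewrite /index_iota subn0 => <-.
by rewrite block_in_prob muBE prodEFin.
Qed.

End Block.

Lemma ae_candidates_avoid D : measurable D -> mu D = 0%E ->
  P.-negligible [set om | exists i j, D (c i j om)].
Proof.
move=> mD D0.
have null i j : P.-negligible (c i j @^-1` D).
  exists (c i j @^-1` D); split => //; first exact: candidate_preimage_measurable.
  by rewrite c_law.
apply: negligibleS (negligible_bigcup (fun i => negligible_bigcup (null i))).
by move=> om [i [j Dij]]; exists i => //; exists j.
Qed.

Variable (dist : X -> X -> R).
Hypotheses (dist_metric : is_metric dist) (borel : borel_of_metric dist).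

Lemma ae_blocks_cluster x :
  supp dist mu x ->
  (forall rho : R, 0 < rho <= 1 ->
     (\sum_(1 <= n <oo) (rho ^+ kappa n)%:E)%E = +oo%E) ->
  P.-negligible [set om | ~ blocks_cluster_at dist kappa c om x].
Proof.
move=> xsupp div; pose ball k := mball dist x k.+1%:R^-1.
have null k : P.-negligible
    (\bigcup_N \bigcap_(n in [set n | (N <= n)%N]) ~` block_in (ball k) n).
  apply: block_in_infinitely_often div (xsupp _ _) => //.
  exact: mball_measurable.
apply: negligibleS (negligible_bigcup null) => om /= nacc.
apply: contrapT => nbad; apply: nacc => r r0 N.
have [k] := ltr_add_invr r0; rewrite add0r => kr.
apply: contrapT => nex; apply: nbad; exists k => //; exists N => // n Nn blk.
apply: nex; exists n => // j jk.
by have := blk j; rewrite mem_iota => /(_ jk) /lt_trans; apply.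
Qed.

End CandidateBlocks.

Theorem mainTheorem12
  (R : realType)
  (dX : measure_display) (X : measurableType dX) (dist : X -> X -> R)
  (mu : probability X R) (Y : countType) (f : X -> Y)
  (m K : nat) (kappa : nat -> nat)
  (Vsel Usel : {fset X} -> X -> {fset X})
  (dO : measure_display) (Omega : measurableType dO) (P : probability Omega R)
  (c : nat -> nat -> Omega -> X) (u w : nat -> Omega -> R) (x : X) :
  is_metric dist ->
  borel_of_metric dist ->
  (forall y, measurable (fiber f y)) ->
  (1 < m)%N -> (m./2 < K)%N ->
  (forall n, (0 < kappa n)%N) ->
  (forall rho : R, 0 < rho <= 1 ->
     (\sum_(1 <= n <oo) (rho ^+ kappa n)%:E)%E = +oo%E) ->
  (forall S z, is_knn_V dist f K S z (Vsel S z)) ->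
  (forall S z, is_knn_U dist f m S z (Usel S z)) ->
  (forall n j, measurable_fun setT (c n j)) ->
  (forall n j B, measurable B -> P (c n j @^-1` B) = mu B) ->
  (forall n, measurable_fun setT (u n)) ->
  (forall n, measurable_fun setT (w n)) ->
  (forall n om, 0 <= u n om < 1) ->
  (forall n om, 0 <= w n om < 1) ->
  (forall n t, 0 <= t <= 1 -> P [set om | u n om < t] = t%:E) ->
  (forall n t, 0 <= t <= 1 -> P [set om | w n om < t] = t%:E) ->
  mutually_independent P
    (fun i : ((nat * nat) + nat) + nat => match i with
     | inl (inl nj) => rv_events (c nj.1 nj.2)
     | inl (inr n) => rv_events (u n)
     | inr n => rv_events (w n)
     end) ->
  (exists C, [/\ f_contiguous_component dist mu f C, C x,
                 measurable C & (0 < mu C)%E]) ->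
  let Phi := fun z S => (#|` Vsel S z| - modefreq f (Vsel S z))%N in
  let Z := Zset kappa Phi c u in
  let zeta := fun n om => mode_with f (f x) (w n om) (Usel (Z n om) x) in
  {ae P, forall om, exists N, forall n, (N <= n)%N -> zeta n om = f x}.
Proof.
move=> metric borel fiber_meas _ _ kappa_gt0 div _ knn c_meas c_law _ _ _ _ _ _ indep.
case=> C [[[_ Csupp noboundary] _] Cx _ _] Phi Z zeta.
have [e e0 nullD] := not_boundary_null_ball (fun bx => noboundary (ex_intro2 _ _ x Cx bx)).
have mD : measurable (mball dist x e `\` fiber f (f x)).
  by apply: measurableD; [exact: mball_measurable | exact: fiber_meas].
have avoid_ae := ae_candidates_avoid c_meas c_law mD nullD.
have cluster_ae := ae_blocks_cluster c_meas c_law indep metric borel (Csupp x Cx) div.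
apply: negligibleS (negligibleU avoid_ae cluster_ae).
move=> om /= not_conv; apply: contrapT => /not_orP[avoid /contrapT acc].
have label i j : dist x (c i j om) < e -> f (c i j om) = f x.
  by move=> dij; apply: contrapT => fne; apply: avoid; exists i, j.
have [N HN] := mode_knn_eventually Phi u kappa_gt0 metric e0
  (fun S => knn S x) label acc.
by apply: not_conv; exists N => n Nn; exact: HN.
Qed.
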